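(* Let $M$ be an entrywise nonnegative $m\times n$ real matrix and let $M=AW$ be a stable nonnegative matrix factorization with $A\in\mathbb{R}_{\ge0}^{m\times r}$, $W\in\mathbb{R}_{\ge0}^{r\times n}$. Let $s=\mathrm{rank}(A)$, $t=\mathrm{rank}(W)$, let $U\subseteq[m]$ be a set of $s$ linearly independent rows of $A$ and $V\subseteq[n]$ a set of $t$ linearly independent columns of $W$, and let $B_1,\dots,B_p$ be the ensemble of $A$ at $U$ and $C_1,\dots,C_q$ the ensemble of $W$ at $V$. Then the test $\mathbb P$ outputs PASS on these $B_1,\dots,B_p$ and $C_1,\dots,C_q$.
   Context: Notation: $M_i$ is the $i$-th column, $M^j$ the $j$-th row; $A_S$ = columns in $S$, $A^U$ = rows in $U$; $M_i^U$ the entries of $M_i$ in rows $U$, $M^j_V$ the entries of $M^j$ in columns $V$. $\mathrm{aff}(A)=\{\sum_k\alpha_kA_k:\alpha_k\ge0\}$. A subset $S\subseteq[r]$ of columns of $A$ is admissible for $v\in\mathbb{R}^m$ if $v\in\mathrm{aff}(A_S)$; a subset $T\subseteq[r]$ of rows of $W$ is admissible for a row vector $u$ if $u$ is a nonnegative combination of the rows of $W^T$. Support = set of indices of nonzero entries. Lexicographic ordering on subsets of $[r]$: if $|S|<|T|$ then $S$ precedes $T$; equal-size subsets compared by standard lexicographic order. $M=AW$ is stable if, with $S_i$ the lexicographically first subset of columns of $A$ admissible for $M_i$ and $T_j$ the lexicographically first subset of rows of $W$ admissible for $M^j$, each $W_i$ is supported in $S_i$ and each row $A^j$ is supported in $T_j$.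 Ensemble of $A$ at $U$: with $S_1,\dots,S_p$ all sets of $s$ linearly independent columns of $A$ in lexicographic order, $B_k$ is the $r\times s$ matrix zero on rows outside $S_k$ whose restriction to rows $S_k$ is $(A^U_{S_k})^{-1}$. Ensemble of $W$ at $V$: with $T_1,\dots,T_q$ all sets of $t$ linearly independent rows of $W$ in lexicographic order, $C_k$ is the $t\times r$ matrix zero on columns outside $T_k$ whose restriction to columns $T_k$ is $(W^{T_k}_V)^{-1}$. For a finite collection $\mathcal S$ of vectors, $\mathrm{first}(\mathcal S)$ is the vector with lexicographically minimal support among the entrywise nonnegative vectors in $\mathcal S$, and is FAIL if there is none or if two or more distinct nonnegative vectors tie for the earliest support. Test $\mathbb P$: set $\hat W_i=\mathrm{first}(\{B_1M_i^U,\dots,B_pM_i^U\})$ and $\hat A^j=\mathrm{first}(\{M^j_VC_1,\dots,M^j_VC_q\})$; PASS iff none is FAIL and $\hat A^j\hat W_i=M^j_i$ for all $i,j$. *)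

From HB Require Import structures.
From mathcomp Require Import all_boot all_order all_algebra.
Set Implicit Arguments. Unset Strict Implicit. Unset Printing Implicit Defensive.
Import Order.TTheory GRing.Theory Num.Theory.
Local Open Scope ring_scope.

Fixpoint lexlt_seq (s t : seq nat) : bool :=
  match s, t with
  | x :: s', y :: t' => (x < y)%N || ((x == y) && lexlt_seq s' t')
  | _, _ => false
  end.

Definition setlt (r : nat) (S T : {set 'I_r}) : bool :=
  (#|S| < #|T|)%N ||
  ((#|S| == #|T|) && lexlt_seq (map val (enum S)) (map val (enum T))).

Definition setle (r : nat) (S T : {set 'I_r}) : bool := (S == T) || setlt S T.

Definition lexfirst (r : nat) (P : {set 'I_r} -> Prop) (S : {set 'I_r}) : Prop :=
  P S /\ forall T, P T -> T <> S -> setlt S T.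

Definition nonneg_mx (R : realFieldType) (m n : nat) (X : 'M[R]_(m, n)) : Prop :=
  forall i j, 0 <= X i j.

Definition admissible_col (R : realFieldType) (m r : nat) (A : 'M[R]_(m, r))
  (v : 'cV[R]_m) (S : {set 'I_r}) : Prop :=
  exists alpha : 'I_r -> R, (forall k, 0 <= alpha k) /\
    v = \sum_(k in S) alpha k *: col k A.

Definition admissible_row (R : realFieldType) (r n : nat) (W : 'M[R]_(r, n))
  (u : 'rV[R]_n) (T : {set 'I_r}) : Prop :=
  exists beta : 'I_r -> R, (forall k, 0 <= beta k) /\
    u = \sum_(k in T) beta k *: row k W.

Definition stable (R : realFieldType) (m r n : nat) (A : 'M[R]_(m, r))
  (W : 'M[R]_(r, n)) : Prop :=
  (forall (i : 'I_n) (S : {set 'I_r}),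
     lexfirst (admissible_col A (col i (A *m W))) S ->
     forall k, W k i != 0 -> k \in S) /\
  (forall (j : 'I_m) (T : {set 'I_r}),
     lexfirst (admissible_row W (row j (A *m W))) T ->
     forall k, A j k != 0 -> k \in T).

Definition sel (T : finType) (X : {set T}) (k : nat) (h : #|X| = k) (i : 'I_k) : T :=
  enum_val (cast_ord (esym h) i).

Definition rows_of (R : realFieldType) (m r : nat) (A : 'M[R]_(m, r)) (U : {set 'I_m})
  : 'M[R]_(#|U|, r) := \matrix_(i, j) A (enum_val i) j.

Definition cols_of (R : realFieldType) (m r : nat) (A : 'M[R]_(m, r)) (S : {set 'I_r})
  : 'M[R]_(m, #|S|) := \matrix_(i, j) A i (enum_val j).

Definition cset (r s : nat) := {S : {set 'I_r} | #|S| == s}.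

Definition cset_card (r s : nat) (S : cset r s) : #|val S| = s := eqP (valP S).

(* B_k for the set S_k: r x s, zero outside rows S_k, rows S_k = (A^U_{S_k})^{-1} *)
Definition ensB (R : realFieldType) (m r : nat) (A : 'M[R]_(m, r)) (U : {set 'I_m})
  (s : nat) (hU : #|U| = s) (S : cset r s) : 'M[R]_(r, s) :=
  let AUS : 'M[R]_s := \matrix_(i, j) A (sel hU i) (sel (cset_card S) j) in
  \matrix_(a, b) \sum_(j < s) (a == sel (cset_card S) j)%:R * (invmx AUS) j b.

Definition ensemble_A (R : realFieldType) (m r : nat) (A : 'M[R]_(m, r))
  (U : {set 'I_m}) (s : nat) (hU : #|U| = s) : seq 'M[R]_(r, s) :=
  [seq ensB A hU X | X <- sort (fun X Y : cset r s => setle (val X) (val Y))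
                              (enum [pred X : cset r s |
                                       \rank (cols_of A (val X)) == s])].

(* C_k for the set T_k: t x r, zero outside columns T_k, columns T_k = (W^{T_k}_V)^{-1} *)
Definition ensC (R : realFieldType) (r n : nat) (W : 'M[R]_(r, n)) (V : {set 'I_n})
  (t : nat) (hV : #|V| = t) (T : cset r t) : 'M[R]_(t, r) :=
  let WTV : 'M[R]_t := \matrix_(i, j) W (sel (cset_card T) i) (sel hV j) in
  \matrix_(a, b) \sum_(j < t) (invmx WTV) a j * (b == sel (cset_card T) j)%:R.

Definition ensemble_W (R : realFieldType) (r n : nat) (W : 'M[R]_(r, n))
  (V : {set 'I_n}) (t : nat) (hV : #|V| = t) : seq 'M[R]_(t, r) :=
  [seq ensC W hV X | X <- sort (fun X Y : cset r t => setle (val X) (val Y))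
                              (enum [pred X : cset r t |
                                       \rank (rows_of W (val X)) == t])].

Definition supp (R : realFieldType) (r : nat) (x : 'rV[R]_r) : {set 'I_r} :=
  [set k | x 0 k != 0].

(* None = FAIL *)
Definition first (R : realFieldType) (r : nat) (L : seq 'rV[R]_r) : option 'rV[R]_r :=
  let N := [seq x <- L | [forall k, 0 <= (x : 'rV[R]_r) 0 k]] in
  let C := [seq x <- N | all (fun y : 'rV[R]_r => ~~ setlt (supp y) (supp x)) N] in
  match C with
  | [::] => None
  | x :: C' => if all (fun y => y == x) C' then Some x else None
  end.

Definition testP (R : realFieldType) (m n r : nat) (M : 'M[R]_(m, n))
  (U : {set 'I_m}) (V : {set 'I_n}) (s t : nat) (hU : #|U| = s) (hV : #|V| = t)
  (Bs : seq 'M[R]_(r, s)) (Cs : seq 'M[R]_(t, r)) : Prop :=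
  let MU (i : 'I_n) : 'cV[R]_s := \col_k M (sel hU k) i in
  let MV (j : 'I_m) : 'rV[R]_t := \row_k M j (sel hV k) in
  (* hat W_i, stored as a row vector (transpose of B_k M_i^U) *)
  let What (i : 'I_n) := first [seq (B *m MU i)^T | B <- Bs] in
  let Ahat (j : 'I_m) := first [seq MV j *m C | C <- Cs] in
  (forall i, What i != None) /\ (forall j, Ahat j != None) /\
  (forall i j w a, What i = Some w -> Ahat j = Some a ->
     \sum_(k < r) a 0 k * w 0 k = M j i).

From HB Require Import structures.
From mathcomp Require Import all_boot all_order all_algebra.
From mathcomp Require Import zify.
From Stdlib Require Import Classical.
Import Order.TTheory GRing.Theory Num.Theory.
Local Open Scope ring_scope.
Set Implicit Arguments. Unset Strict Implicit. Unset Printing Implicit Defensive.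

(* Write M_i = A W_i.  Stability says that supp W_i lies in the lexicographically
   first admissible set S_i for M_i; being admissible itself, it equals S_i.  The
   columns A_{S_i} are linearly independent, for otherwise the simplex ratio test
   would produce an admissible proper subset of S_i.  Extend S_i to a set X of
   rank A independent columns: as the rows U span the row space of A, the
   ensemble matrix B_X inverts A on its column space, so B_X M_i^U is the unique
   solution of A x = M_i supported in X, namely W_i.  Every other nonnegative
   candidate B_k M_i^U also solves A x = M_i, so its support is admissible and
   comes after S_i, with a tie only for W_i itself.  Hence first returns W_i; the
   rows of A are recovered by transposition, and A^j W_i = M^j_i. *)

Lemma lexlt_seq_irr s : lexlt_seq s s = false.
Proof. by elim: s => //= x s ->; rewrite ltnn eqxx. Qed.

Lemma lexlt_seq_trans s t u : lexlt_seq s t -> lexlt_seq t u -> lexlt_seq s u.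
Proof.
elim: s t u => [|x s IH] [|y t] [|z u] //=.
case/orP=> [xy|/andP[/eqP-> st]]; case/orP=> [yz|/andP[/eqP<- tu]].
- by rewrite (ltn_trans xy yz).
- by rewrite xy.
- by rewrite yz.
- by rewrite eqxx (IH _ _ st tu) orbT.
Qed.

Lemma lexlt_seq_total s t :
  size s = size t -> s != t -> lexlt_seq s t || lexlt_seq t s.
Proof.
elim: s t => [|x s IH] [|y t] //= [size_st].
case: (ltngtP x y) => [_ _|_ _|->] /=; rewrite ?orbT // => neq.
by apply: IH => //; apply: contra neq => /eqP->.
Qed.

Section SetOrder.
Variable r : nat.
Implicit Types S T X : {set 'I_r}.

Lemma setlt_irr S : setlt S S = false.
Proof. by rewrite /setlt ltnn eqxx lexlt_seq_irr. Qed.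

Lemma setlt_trans S T X : setlt S T -> setlt T X -> setlt S X.
Proof.
rewrite /setlt; case/orP=> [lt1|/andP[/eqP e1 l1]]; case/orP=> [lt2|/andP[/eqP e2 l2]].
- by rewrite (ltn_trans lt1 lt2).
- by rewrite -e2 lt1.
- by rewrite e1 lt2.
- by rewrite e1 e2 eqxx (lexlt_seq_trans l1 l2) orbT.
Qed.

Lemma setlt_asym S T : setlt S T -> ~~ setlt T S.
Proof. by move=> ST; apply/negP=> /(setlt_trans ST); rewrite setlt_irr. Qed.

Lemma setlt_total S T : S != T -> setlt S T || setlt T S.
Proof.
move=> neq; rewrite /setlt; case: (ltngtP #|S| #|T|) => [||eST] //=; rewrite ?orbT //.
apply: lexlt_seq_total; first by rewrite !size_map -!cardE eST.
apply: contra neq => /eqP /(inj_map val_inj) eq_enum_ST.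
by apply/eqP/setP=> x; rewrite -mem_enum eq_enum_ST mem_enum.
Qed.

Lemma setlt_proper S T : S \proper T -> setlt S T.
Proof. by move=> /proper_card ltST; rewrite /setlt ltST. Qed.

Lemma lexfirst_exists (P : {set 'I_r} -> Prop) S : P S -> exists T, lexfirst P T.
Proof.
suff: forall n S, (#|[set T | setlt T S]| < n)%N -> P S -> exists T, lexfirst P T.
  by apply; apply: ltnSn.
elim=> // n IH {}S; rewrite ltnS => le_n PS.
have [[T [PT TS]] | noT] := classic (exists T, P T /\ setlt T S).
  apply: (IH T) PT; apply: leq_trans le_n; apply: proper_card; apply/properP.
  split; last by exists T; rewrite !inE ?TS ?setlt_irr.
  by apply/subsetP=> X; rewrite !inE => /setlt_trans; apply.
exists S; split=> // T PT /eqP; rewrite eq_sym => /setlt_total/orP[//|TS].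
by case: noT; exists T.
Qed.

Lemma lexfirst_subset (P : {set 'I_r} -> Prop) S T :
  lexfirst P S -> P T -> T \subset S -> T = S.
Proof.
move=> [_ firstS] PT sub_TS; apply/eqP; apply: contraT => neq.
move/setlt_asym: (firstS T PT (elimN eqP neq)).
by rewrite setlt_proper // properEneq neq.
Qed.

Lemma lexfirst_iff (P Q : {set 'I_r} -> Prop) S :
  (forall T, P T <-> Q T) -> lexfirst P S -> lexfirst Q S.
Proof. by move=> PQ [PS firstS]; split=> [|T /PQ]; [apply/PQ | apply: firstS]. Qed.

End SetOrder.

Section Selection.
Variable R : realFieldType.

Lemma sum_natr_eq_mull (T : finType) (c : T) (f : T -> R) :
  \sum_b (b == c)%:R * f b = f c.
Proof.
by rewrite (bigD1 c) //= eqxx mul1r big1 ?addr0 // => b /negbTE->; rewrite mul0r.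
Qed.

Lemma sum_natr_eq_mulr (T : finType) (c : T) (f : T -> R) :
  \sum_b f b * (b == c)%:R = f c.
Proof. by under eq_bigr do rewrite mulrC; apply: sum_natr_eq_mull. Qed.

Lemma in_suppT r (y : 'cV[R]_r) k : (k \in supp y^T) = (y k 0 != 0).
Proof. by rewrite inE mxE. Qed.

Lemma suppT_subset_eq0 r (y : 'cV[R]_r) (S : {set 'I_r}) a :
  supp y^T \subset S -> a \notin S -> y a 0 = 0.
Proof. by move=> suppy; apply: contraNeq; rewrite -in_suppT; apply: (subsetP suppy). Qed.

Lemma suppT_subB r (y1 y2 : 'cV[R]_r) (S : {set 'I_r}) :
  supp y1^T \subset S -> supp y2^T \subset S -> supp (y1 - y2)^T \subset S.
Proof.
move=> supp1 supp2; apply/subsetP=> a; rewrite in_suppT; apply: contraR => aS.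
by rewrite !mxE (suppT_subset_eq0 supp1 aS) (suppT_subset_eq0 supp2 aS) subrr.
Qed.

Variables (r k : nat) (X : {set 'I_r}) (h : #|X| = k).

Lemma sel_inj : injective (sel h).
Proof. by move=> i j /enum_val_inj /cast_ord_inj. Qed.

Lemma sel_mem j : sel h j \in X.
Proof. exact: enum_valP. Qed.

Lemma eq_sel_notin a j : a \notin X -> (a == sel h j) = false.
Proof. by move=> aX; apply: contraNF aX => /eqP->; apply: sel_mem. Qed.

Definition sel_mx : 'M[R]_(r, k) := \matrix_(a, j) (a == sel h j)%:R.

Lemma mul_sel_mx m (A : 'M[R]_(m, r)) : A *m sel_mx = \matrix_(p, j) A p (sel h j).
Proof.
apply/matrixP=> p j; rewrite !mxE.
by under eq_bigr do rewrite mxE; apply: sum_natr_eq_mulr.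
Qed.

Lemma tr_sel_mx_mul n (A : 'M[R]_(r, n)) : sel_mx^T *m A = \matrix_(j, q) A (sel h j) q.
Proof.
apply/matrixP=> j q; rewrite !mxE.
by under eq_bigr do rewrite !mxE; apply: sum_natr_eq_mull.
Qed.

Lemma tr_sel_mx_mul_sel_mx : sel_mx^T *m sel_mx = 1%:M.
Proof. by apply/matrixP=> i j; rewrite tr_sel_mx_mul !mxE (inj_eq sel_inj). Qed.

Lemma suppT_sel_mx_mul (z : 'cV[R]_k) : supp (sel_mx *m z)^T \subset X.
Proof.
apply/subsetP=> a; rewrite in_suppT; apply: contraR => aX.
by rewrite mxE big1 // => j _; rewrite mxE eq_sel_notin ?mul0r.
Qed.

Lemma sel_mxK (y : 'cV[R]_r) : supp y^T \subset X -> sel_mx *m (sel_mx^T *m y) = y.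
Proof.
move=> suppy; rewrite tr_sel_mx_mul; apply/colP=> a; rewrite !mxE.
under eq_bigr do rewrite !mxE.
case: (boolP (a \in X)) => [aX | aX].
  have -> : a = sel h (cast_ord h (enum_rank_in aX a)).
    by rewrite /sel cast_ordK enum_rankK_in.
  by under eq_bigr do rewrite (inj_eq sel_inj) eq_sym; apply: sum_natr_eq_mull.
rewrite (suppT_subset_eq0 suppy aX).
by rewrite big1 // => j _; rewrite eq_sel_notin ?mul0r.
Qed.

End Selection.

Section Cone.
Variables (R : realFieldType) (m r : nat) (A : 'M[R]_(m, r)).
Implicit Types S : {set 'I_r}.

Lemma cols_of_sel_mx S : cols_of A S = A *m sel_mx R (erefl #|S|).
Proof. by rewrite mul_sel_mx; apply/matrixP=> p j; rewrite !mxE /sel cast_ord_id. Qed.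

Lemma mxrank_mul_sel_mx S k (h : #|S| = k) :
  \rank (A *m sel_mx R h) = \rank (cols_of A S).
Proof. by case: k / h; rewrite cols_of_sel_mx. Qed.

Lemma mulmx_sum_col (y : 'cV[R]_r) : A *m y = \sum_k y k 0 *: col k A.
Proof.
by apply/colP=> p; rewrite !mxE summxE; apply: eq_bigr => k _; rewrite !mxE mulrC.
Qed.

Lemma admissible_col_supp (y : 'cV[R]_r) :
  (forall k, 0 <= y k 0) -> admissible_col A (A *m y) (supp y^T).
Proof.
move=> y_ge0; exists (fun k => y k 0); split=> //.
rewrite mulmx_sum_col [RHS]big_mkcond; apply: eq_bigr => k _.
by rewrite in_suppT; case: eqP => [->|]; rewrite ?scale0r.
Qed.

Lemma admissible_colP v S : admissible_col A v S ->
  exists y : 'cV[R]_r, [/\ forall k, 0 <= y k 0, supp y^T \subset S & A *m y = v].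
Proof.
move=> [al [al_ge0 ->]]; exists (\col_k (if k \in S then al k else 0)); split.
- by move=> k; rewrite mxE; case: ifP.
- by apply/subsetP=> k; rewrite in_suppT mxE; case: ifP; rewrite ?eqxx.
- rewrite mulmx_sum_col [RHS]big_mkcond; apply: eq_bigr => k _.
  by rewrite mxE; case: ifP; rewrite ?scale0r.
Qed.

Lemma cols_free_mul_eq0 S (y : 'cV[R]_r) :
  \rank (cols_of A S) = #|S| -> supp y^T \subset S -> A *m y = 0 -> y = 0.
Proof.
move=> free_S /(sel_mxK (erefl #|S|)) <-; rewrite mulmxA -cols_of_sel_mx => Cz.
have free_Ct : row_free (cols_of A S)^T by rewrite /row_free mxrank_tr free_S.
suff -> : (sel_mx R (erefl #|S|))^T *m y = 0 by rewrite mulmx0.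
by apply: trmx_inj; apply: (row_free_inj free_Ct); rewrite -trmx_mul Cz !trmx0 mul0mx.
Qed.

Lemma cols_free_mul_inj S (y1 y2 : 'cV[R]_r) :
  \rank (cols_of A S) = #|S| -> supp y1^T \subset S -> supp y2^T \subset S ->
  A *m y1 = A *m y2 -> y1 = y2.
Proof.
move=> free_S supp1 supp2 /eqP; rewrite -subr_eq0 -mulmxBr => /eqP A12.
by apply/eqP; rewrite -subr_eq0; apply/eqP/(cols_free_mul_eq0 free_S _ A12)/suppT_subB.
Qed.

Lemma cols_not_free_kernel S : \rank (cols_of A S) != #|S| ->
  exists g : 'cV[R]_r, [/\ g != 0, supp g^T \subset S & A *m g = 0].
Proof.
move=> not_free; have : kermx (cols_of A S)^T != 0.
  rewrite -mxrank_eq0 mxrank_ker mxrank_tr subn_eq0 -ltnNge.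
  by rewrite ltn_neqAle not_free rank_leq_col.
case/rowV0Pn=> z /sub_kermxP zC z_neq0.
exists (sel_mx R (erefl #|S|) *m z^T); split.
- apply: contraNneq z_neq0 => /(congr1 (mulmx (sel_mx R (erefl #|S|))^T)).
  rewrite mulmxA tr_sel_mx_mul_sel_mx mul1mx mulmx0 => /(congr1 trmx).
  by rewrite trmxK trmx0 => ->.
- exact: suppT_sel_mx_mul.
- by rewrite mulmxA -cols_of_sel_mx -[cols_of A S]trmxK -trmx_mul zC trmx0.
Qed.

(* The simplex ratio test: move from [y] along [- g] until a coordinate vanishes. *)
Lemma ratio_test (y g : 'cV[R]_r) k : (forall a, 0 <= y a 0) -> 0 < g k 0 ->
  exists t, exists2 ks, g ks 0 != 0 &
    (y - t *: g) ks 0 = 0 /\ forall a, 0 <= (y - t *: g) a 0.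
Proof.
move=> y_ge0 gk_gt0.
case: (@arg_minP _ _ _ k (fun j => 0 < g j 0) (fun j => y j 0 / g j 0) gk_gt0)
  => ks gks_gt0 ks_min.
exists (y ks 0 / g ks 0), ks; first by rewrite gt_eqF.
split; first by rewrite !mxE divfK ?subrr // gt_eqF.
move=> a; rewrite !mxE subr_ge0; case: (ltrP 0 (g a 0)) => [ga_gt0 | ga_le0].
  by rewrite -ler_pdivlMr //; apply: ks_min.
by apply: le_trans (y_ge0 a); rewrite mulr_ge0_le0 // divr_ge0 ?y_ge0 ?ltW.
Qed.

Lemma lexfirst_cols_free v S :
  lexfirst (admissible_col A v) S -> \rank (cols_of A S) = #|S|.
Proof.
move=> firstS; have [y [y_ge0 suppy Ay]] := admissible_colP firstS.1.
apply/eqP; apply: contraT => /cols_not_free_kernel [g [g_neq0 suppg Ag]].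
have [k gk_neq0] : exists k, g k 0 != 0.
  apply/existsP; apply: contraNT g_neq0 => /existsPn g0.
  by apply/eqP/colP=> k; rewrite mxE; apply/eqP/negbNE.
pose g' := (g k 0)^-1 *: g.
have g'k : 0 < g' k 0 by rewrite mxE mulVf.
have [t [ks g'ks_neq0 [y'ks y'_ge0]]] := ratio_test y_ge0 g'k.
have Ay' : A *m (y - t *: g') = v by rewrite mulmxBr -!scalemxAr Ag !scaler0 subr0.
have ksS : ks \in S.
  apply: (subsetP suppg); rewrite in_suppT.
  by move: g'ks_neq0; rewrite mxE mulf_eq0 negb_or => /andP[].
have suppy' : supp (y - t *: g')^T \subset S.
  apply/subsetP=> a; rewrite in_suppT; apply: contraR => aS.
  by rewrite !mxE (suppT_subset_eq0 suppy aS) (suppT_subset_eq0 suppg aS) !mulr0 subrr.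
have adm_y' : admissible_col A v (supp (y - t *: g')^T).
  by rewrite -Ay'; apply: admissible_col_supp.
move/setP/(_ ks): (lexfirst_subset firstS adm_y' suppy').
by rewrite in_suppT y'ks eqxx ksS.
Qed.

End Cone.

Section RowSpace.
Variables (R : realFieldType) (r n : nat) (B : 'M[R]_(r, n)).
Implicit Types S X : {set 'I_r}.

Lemma rows_of_sel_mx S : rows_of B S = (sel_mx R (erefl #|S|))^T *m B.
Proof. by rewrite tr_sel_mx_mul; apply/matrixP=> i q; rewrite !mxE /sel cast_ord_id. Qed.

Lemma row_sub_rows_of S k : k \in S -> (row k B <= rows_of B S)%MS.
Proof.
move=> kS; have := row_sub (enum_rank_in kS k) (rows_of B S).
by congr (_ <= _)%MS; apply/rowP=> q; rewrite !mxE enum_rankK_in.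
Qed.

Lemma rows_of_subP S m (C : 'M[R]_(m, n)) :
  reflect (forall k, k \in S -> (row k B <= C)%MS) (rows_of B S <= C)%MS.
Proof.
apply: (iffP idP) => [subC k kS | subC].
  exact: submx_trans (row_sub_rows_of kS) subC.
apply/row_subP=> j.
have -> : row j (rows_of B S) = row (enum_val j) B by apply/rowP=> q; rewrite !mxE.
exact/subC/enum_valP.
Qed.

Lemma rows_of_sub S : (rows_of B S <= B)%MS.
Proof. by apply/rows_of_subP=> k _; apply: row_sub. Qed.

Lemma rows_free_setU1 S k : \rank (rows_of B S) = #|S| ->
  ~~ (row k B <= rows_of B S)%MS -> \rank (rows_of B (k |: S)) = #|k |: S|.
Proof.
move=> free_S not_sub.
have kS : k \notin S by apply: contra not_sub; apply: row_sub_rows_of.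
apply/eqP; rewrite eqn_leq rank_leq_row /=.
apply: (@leq_trans (\rank (rows_of B S)).+1); first by rewrite free_S cardsU1 kS.
apply: rank_ltmx; rewrite ltmxE; apply/andP; split.
  by apply/rows_of_subP=> a aS; apply: row_sub_rows_of; rewrite setU1r.
by apply: contra not_sub; apply: submx_trans; apply: row_sub_rows_of; rewrite setU11.
Qed.

Lemma rows_free_extend S : \rank (rows_of B S) = #|S| ->
  exists X, [/\ S \subset X, #|X| = \rank B & \rank (rows_of B X) = #|X|].
Proof.
have [d] := ubnP (\rank B - #|S|); elim: d S => // d IH S lt_d free_S.
have [le_rank | lt_rank] := leqP (\rank B) #|S|.
  exists S; split=> //; apply/eqP; rewrite eqn_leq le_rank andbT -{1}free_S.
  exact/mxrankS/rows_of_sub.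
have : ~~ (B <= rows_of B S)%MS.
  by apply: contraTN lt_rank => /mxrankS; rewrite free_S -leqNgt.
case/row_subPn=> k not_sub.
have kS : k \notin S by apply: contra not_sub; apply: row_sub_rows_of.
have [|X [subX cardX freeX]] := IH (k |: S) _ (rows_free_setU1 free_S not_sub).
  by rewrite cardsU1 kS; lia.
by exists X; split=> //; apply: subset_trans subX; apply: subsetUr.
Qed.

End RowSpace.

Lemma mxrank_cols_of (R : realFieldType) m r (A : 'M[R]_(m, r)) S :
  \rank (cols_of A S) = \rank (rows_of A^T S).
Proof. by rewrite -mxrank_tr; congr mxrank; apply/matrixP=> i j; rewrite !mxE. Qed.

Section Ensemble.
Variable R : realFieldType.

Lemma ensBE m r (A : 'M[R]_(m, r)) (U : {set 'I_m}) s (hU : #|U| = s)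
    (X : cset r s) :
  ensB A hU X = sel_mx R (cset_card X)
    *m invmx ((sel_mx R hU)^T *m A *m sel_mx R (cset_card X)).
Proof.
have -> : (sel_mx R hU)^T *m A *m sel_mx R (cset_card X) =
    \matrix_(i, j) A (sel hU i) (sel (cset_card X) j).
  by apply/matrixP=> i j; rewrite mul_sel_mx tr_sel_mx_mul !mxE.
by apply/matrixP=> a b; rewrite !mxE; apply: eq_bigr => j _; rewrite !mxE.
Qed.

Lemma ensCE r n (W : 'M[R]_(r, n)) (V : {set 'I_n}) t (hV : #|V| = t)
    (T : cset r t) :
  ensC W hV T = invmx ((sel_mx R (cset_card T))^T *m W *m sel_mx R hV)
    *m (sel_mx R (cset_card T))^T.
Proof.
have -> : (sel_mx R (cset_card T))^T *m W *m sel_mx R hV =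
    \matrix_(i, j) W (sel (cset_card T) i) (sel hV j).
  by apply/matrixP=> i j; rewrite mul_sel_mx tr_sel_mx_mul !mxE.
by apply/matrixP=> a b; rewrite !mxE; apply: eq_bigr => j _; rewrite !mxE.
Qed.

Lemma ensC_tr r n (W : 'M[R]_(r, n)) (V : {set 'I_n}) t (hV : #|V| = t)
    (T : cset r t) :
  ensC W hV T = (ensB W^T hV T)^T.
Proof. by rewrite ensCE ensBE trmx_mul trmx_inv !trmx_mul !trmxK !mulmxA. Qed.

Lemma ensemble_W_tr r n (W : 'M[R]_(r, n)) (V : {set 'I_n}) t (hV : #|V| = t) :
  ensemble_W W hV = map trmx (ensemble_A W^T hV).
Proof.
rewrite /ensemble_W /ensemble_A -map_comp.
have -> : enum [pred X : cset r t | \rank (rows_of W (val X)) == t] =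
          enum [pred X : cset r t | \rank (cols_of W^T (val X)) == t].
  by apply: eq_enum => X; rewrite !inE mxrank_cols_of trmxK.
by apply: eq_map => X; rewrite ensC_tr.
Qed.

Lemma suppT_ensB_mul m r (A : 'M[R]_(m, r)) (U : {set 'I_m}) s (hU : #|U| = s)
    (X : cset r s) (z : 'cV[R]_s) :
  supp (ensB A hU X *m z)^T \subset val X.
Proof. by rewrite ensBE -mulmxA suppT_sel_mx_mul. Qed.

(* [B_X] inverts [A] on its column space as soon as the rows [U] span its row space. *)
Lemma mul_ensB m r (A : 'M[R]_(m, r)) (U : {set 'I_m}) s (hU : #|U| = s)
    (X : cset r s) (w : 'cV[R]_r) :
  \rank (rows_of A U) = \rank A -> \rank (cols_of A (val X)) = s ->
  A *m (ensB A hU X *m ((sel_mx R hU)^T *m (A *m w))) = A *m w.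
Proof.
case: s / hU X => X spanU freeX; rewrite ensBE.
set PU := sel_mx R (erefl #|U|); set PX := sel_mx R (cset_card X).
set K := PU^T *m A *m PX.
have [D defA] : exists D, A = D *m (PU^T *m A).
  have : (A <= rows_of A U)%MS by rewrite -(mxrank_leqif_sup (rows_of_sub A U)).2 spanU.
  by case/submxP=> D; rewrite rows_of_sel_mx; exists D.
have APX : A *m PX = D *m K by rewrite /K mulmxA -defA.
have unitK : K \in unitmx.
  rewrite -row_free_unit /row_free eqn_leq rank_leq_row /= -{1}freeX.
  by rewrite -(mxrank_mul_sel_mx A (cset_card X)) APX mxrankM_maxr.
by rewrite !mulmxA APX -(mulmxA D) mulmxV // mulmx1 -(mulmxA D) -defA.
Qed.

End Ensemble.

Section FirstOfEnsemble.
Variable R : realFieldType.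

Lemma first_min r (L : seq 'rV[R]_r) z : z \in L -> (forall k, 0 <= z 0 k) ->
  (forall x, x \in L -> (forall k, 0 <= x 0 k) -> x = z \/ setlt (supp z) (supp x)) ->
  first L = Some z.
Proof.
move=> zL z_ge0 zmin; rewrite /first.
set N := [seq x <- L | _].
have minN x : x \in N -> x = z \/ setlt (supp z) (supp x).
  by rewrite mem_filter => /andP[/forallP x_ge0 xL]; apply: zmin.
have zN : z \in N by rewrite mem_filter zL andbT; apply/forallP.
set C := [seq x <- N | _].
have Cz x : x \in C -> x = z.
  rewrite mem_filter => /andP[/allP not_lt xN].
  by case: (minN x xN) => // lt_zx; move: (not_lt z zN); rewrite lt_zx.
have zC : z \in C.
  rewrite mem_filter zN andbT; apply/allP=> y yN.
  by case: (minN y yN) => [->|/setlt_asym //]; rewrite setlt_irr.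
clearbody C; case: C Cz zC => [//|x C'] Cz _; rewrite (Cz x (mem_head _ _)).
by rewrite (_ : all _ C' = true) //; apply/allP=> y yC; apply/eqP/Cz; rewrite inE yC orbT.
Qed.

Lemma first_ensemble_A m r (A : 'M[R]_(m, r)) (U : {set 'I_m}) s (hU : #|U| = s)
    (w : 'cV[R]_r) :
  \rank A = s -> \rank (rows_of A U) = \rank A -> (forall k, 0 <= w k 0) ->
  (forall S, lexfirst (admissible_col A (A *m w)) S -> supp w^T \subset S) ->
  first [seq (B *m ((sel_mx R hU)^T *m (A *m w)))^T | B <- ensemble_A A hU]
    = Some w^T.
Proof.
move=> rankA spanU w_ge0 stable_w.
have adm_w := admissible_col_supp A w_ge0.
have [S firstS] := lexfirst_exists adm_w.
have suppw : supp w^T = S := lexfirst_subset firstS adm_w (stable_w S firstS).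
have freeS := lexfirst_cols_free firstS.
have := freeS; rewrite mxrank_cols_of => /rows_free_extend [X [subSX cardX freeX]].
rewrite -mxrank_cols_of in freeX.
have cardXs : #|X| == s by rewrite cardX mxrank_tr rankA.
apply: first_min => [||x /mapP[B /mapP[Y]]].
- apply/mapP; exists (ensB A hU (Sub X cardXs)).
    apply: map_f; rewrite mem_sort mem_enum inE /= freeX.
    exact: cardXs.
  congr trmx; apply: (cols_free_mul_inj freeX); first by rewrite suppw.
    exact: suppT_ensB_mul.
  by rewrite mul_ensB //= freeX; apply/eqP.
- by move=> k; rewrite mxE.
rewrite mem_sort mem_enum inE => /eqP freeY -> -> y_ge0.
set y := ensB A hU Y *m _.
have Ay : A *m y = A *m w by apply: mul_ensB.
have adm_y : admissible_col A (A *m w) (supp y^T).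
  by rewrite -Ay; apply: admissible_col_supp => k; have := y_ge0 k; rewrite mxE.
rewrite suppw; have [suppyS | neq] := eqVneq (supp y^T) S.
  by left; congr trmx; apply: (cols_free_mul_inj freeS); rewrite ?suppyS ?suppw.
by right; apply: firstS.2 adm_y (elimN eqP neq).
Qed.

End FirstOfEnsemble.

Lemma admissible_row_tr (R : realFieldType) r n (W : 'M[R]_(r, n)) (u : 'rV[R]_n)
    (T : {set 'I_r}) :
  admissible_row W u T <-> admissible_col W^T u^T T.
Proof.
have tr_sum (be : 'I_r -> R) :
    (\sum_(k in T) be k *: row k W)^T = \sum_(k in T) be k *: col k W^T.
  by rewrite linear_sum; apply: eq_bigr => k _; rewrite linearZ /= tr_row.
split=> -[be [be_ge0 def_u]]; exists be; split=> //; first by rewrite def_u tr_sum.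
by apply: trmx_inj; rewrite def_u tr_sum.
Qed.

Lemma col_mul (R : realFieldType) m n p (i : 'I_p) (A : 'M[R]_(m, n))
    (B : 'M[R]_(n, p)) :
  col i (A *m B) = A *m col i B.
Proof. by rewrite !colE mulmxA. Qed.

Theorem mainTheorem9 (R : realFieldType) (m n r : nat)
  (M : 'M[R]_(m, n)) (A : 'M[R]_(m, r)) (W : 'M[R]_(r, n))
  (U : {set 'I_m}) (V : {set 'I_n})
  (hU : #|U| = \rank A) (hV : #|V| = \rank W) :
  nonneg_mx M -> nonneg_mx A -> nonneg_mx W ->
  M = A *m W -> stable A W ->
  \rank (rows_of A U) = \rank A ->
  \rank (cols_of W V) = \rank W ->
  testP M hU hV (ensemble_A A hU) (ensemble_W W hV).
Proof.
move=> _ A_ge0 W_ge0 -> [stableW stableA] spanU spanV.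
have What i : first [seq (B *m \col_k (A *m W) (sel hU k) i)^T | B <- ensemble_A A hU]
    = Some (col i W)^T.
  rewrite -(first_ensemble_A hU (erefl _) spanU (w := col i W)) => [||S firstS].
  - congr first; apply: eq_map => B; congr (_ *m _)^T.
    by rewrite -col_mul tr_sel_mx_mul; apply/colP=> k; rewrite !mxE.
  - by move=> k; rewrite mxE.
  by apply/subsetP=> k; rewrite in_suppT mxE; apply: stableW; rewrite col_mul.
have Ahat j : first [seq \row_k (A *m W) j (sel hV k) *m C | C <- ensemble_W W hV]
    = Some (row j A).
  rewrite -[row j A]trmxK ensemble_W_tr -map_comp.
  rewrite -(first_ensemble_A hV (mxrank_tr W) _ (w := (row j A)^T)) => [||k|T firstT].
  - congr first; apply: eq_map => B /=; rewrite trmx_mul; congr (_ *m _).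
    by rewrite !trmx_mul !trmxK -row_mul mul_sel_mx; apply/rowP=> k; rewrite !mxE.
  - by rewrite -mxrank_cols_of mxrank_tr.
  - by rewrite !mxE.
  apply/subsetP=> k; rewrite in_suppT !mxE; apply: stableA.
  apply: lexfirst_iff firstT => X; rewrite admissible_row_tr.
  by rewrite row_mul trmx_mul.
rewrite /testP /=; split; first by move=> i; rewrite What.
split; first by move=> j; rewrite Ahat.
move=> i j w a; rewrite What Ahat => -[<-] [<-].
by rewrite !mxE; apply: eq_bigr => k _; rewrite !mxE.
Qed.
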